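(* Let $Y$ be a finite set (and $X$ a finite set), $\rho\in(0,1/2)$, $\delta_2\in(0,1/2)$, $\gamma>0$. Every deterministic protocol for $\textsc{Agree}_{\delta_2,\gamma}(\mathcal D_\rho)$ yields (by interpreting Alice's and Bob's input strings $r,s\in\{0,1\}^{|Y|}$ as the truth tables of $f',g':Y\to\{0,1\}$) a deterministic protocol, with the same communication, for $\textsc{Agreement-Distillation}^k_{\gamma,\rho}$ on strings of length $|Y|$, where $k=(1-h(\delta_2))|Y|$ and $h(x)=-x\log x-(1-x)\log(1-x)$ is the binary entropy function.
   Context: For Boolean functions on $X\times Y$, $\delta(f,g)$ is the fraction of $(x,y)\in X\times Y$ with $f(x,y)\ne g(x,y)$. $\mathcal F_B$ is the set of functions $f:X\times Y\to\{0,1\}$ of the form $f(x,y)=f'(y)$ for some $f':Y\to\{0,1\}$. $\mathcal D_\rho$ is the distribution on pairs $(f,g)$ obtained by drawing $f$ uniformly from $\mathcal F_B$ and setting $g(x,y)=g'(y)$ where independently for each $y\in Y$, $g'(y)=f'(y)$ with probability $1-\rho$ and $g'(y)=1-f'(y)$ with probability $\rho$. $\textsc{Agree}_{\delta_2,\gamma}(\mathcal D_\rho)$: Alice gets $f$, Bob gets $g$ with $(f,g)\sim\mathcal D_\rho$; Alice outputs $q_A$, Bob outputs $q_B$ with always $\delta(q_A,f)\le\delta_2$, $\delta(q_B,g)\le\delta_2$, and $\Pr[q_A=q_B]\ge\gamma$ over the input distribution. A pair $(r,s)\in\{0,1\}^m\times\{0,1\}^m$ is $\rho$-perturbed if the pairs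 $(r_i,s_i)$ are independent, each $r_i$ uniform and $s_i=r_i$ with probability $1-\rho$, $s_i\ne r_i$ with probability $\rho$. $\textsc{Agreement-Distillation}^k_{\gamma,\rho}$: Alice gets $r$ and Bob gets $s$ with $(r,s)$ $\rho$-perturbed; they communicate deterministically and output $w_A$, $w_B$ such that $H_\infty(w_A),H_\infty(w_B)\ge k$ and $\Pr[w_A=w_B]\ge\gamma$, where $H_\infty(W)=\min_{w\in\mathrm{supp}(W)}(-\log\Pr[W=w])$. Logs base 2. *)

From HB Require Import structures.
From mathcomp Require Import all_boot.
From Stdlib Require Import Reals.

Set Implicit Arguments.
Unset Strict Implicit.
Unset Printing Implicit Defensive.

Inductive proto (A B : Type) : Type :=
| PDone
| PAlice (msg : A -> bool) (next : bool -> proto A B)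
| PBob (msg : B -> bool) (next : bool -> proto A B).

Arguments PDone {A B}.

Fixpoint transcript A B (p : proto A B) (a : A) (b : B) : seq bool :=
  match p with
  | PDone => [::]
  | PAlice m k => m a :: transcript (k (m a)) a b
  | PBob m k => m b :: transcript (k (m b)) a b
  end.

Fixpoint depth A B (p : proto A B) : nat :=
  match p with
  | PDone => 0
  | PAlice _ k => (maxn (depth (k true)) (depth (k false))).+1
  | PBob _ k => (maxn (depth (k true)) (depth (k false))).+1
  end.

Record dprotocol (A B O : Type) := DProtocol {
  dp_tree : proto A B;
  dp_outA : A -> seq bool -> O;
  dp_outB : B -> seq bool -> O
}.

Definition comm A B O (P : dprotocol A B O) : nat := depth (dp_tree P).

Definition runA A B O (P : dprotocol A B O) (a : A) (b : B) : O :=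
  dp_outA P a (transcript (dp_tree P) a b).
Definition runB A B O (P : dprotocol A B O) (a : A) (b : B) : O :=
  dp_outB P b (transcript (dp_tree P) a b).

Fixpoint proto_comap A B A' B' (fa : A' -> A) (fb : B' -> B) (p : proto A B)
  : proto A' B' :=
  match p with
  | PDone => PDone
  | PAlice m k => PAlice (fun a' => m (fa a')) (fun c => proto_comap fa fb (k c))
  | PBob m k => PBob (fun b' => m (fb b')) (fun c => proto_comap fa fb (k c))
  end.

Definition dp_comap A B A' B' O (fa : A' -> A) (fb : B' -> B)
  (P : dprotocol A B O) : dprotocol A' B' O :=
  DProtocol (proto_comap fa fb (dp_tree P))
            (fun a' t => dp_outA P (fa a') t)
            (fun b' t => dp_outB P (fb b') t).

Local Open Scope R_scope.

Definition Rsum (T : finType) (F : T -> R) : R := \big[Rplus/0]_(t : T) F t.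
Definition Rprod (T : finType) (F : T -> R) : R := \big[Rmult/1]_(t : T) F t.
Definition b2R (b : bool) : R := if b then 1 else 0.

Definition log2 (x : R) : R := ln x / ln 2.

Definition binent (x : R) : R := - x * log2 x - (1 - x) * log2 (1 - x).

Definition delta (T : finType) (f g : {ffun T -> bool}) : R :=
  INR #|[set t | f t != g t]| / INR #|T|.

(* Probability weight of a rho-perturbed pair (r, s) indexed by I:
   r uniform, each coordinate of s flipped independently with prob. rho. *)
Definition pert_weight (I : finType) (rho : R) (r s : {ffun I -> bool}) : R :=
  (/ 2) ^ #|I| * Rprod (fun i : I => if r i == s i then 1 - rho else rho).

Definition liftB (X Y : finType) (f' : {ffun Y -> bool}) : {ffun X * Y -> bool} :=
  [ffun p => f' p.2].

Definition F_B (X Y : finType) : {set {ffun X * Y -> bool}} :=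
  [set liftB X f' | f' : {ffun Y -> bool}].

(* Pr_{(f,g) ~ D_rho}[E f g]; f uniform on F_B corresponds to f' uniform,
   since liftB is injective. *)
Definition Pr_D (X Y : finType) (rho : R)
  (E : {ffun X * Y -> bool} -> {ffun X * Y -> bool} -> bool) : R :=
  Rsum (fun f' : {ffun Y -> bool} => Rsum (fun g' : {ffun Y -> bool} =>
    pert_weight rho f' g' * b2R (E (liftB X f') (liftB X g')))).

Definition Pr_pert (m : nat) (rho : R)
  (E : {ffun 'I_m -> bool} -> {ffun 'I_m -> bool} -> bool) : R :=
  Rsum (fun r : {ffun 'I_m -> bool} => Rsum (fun s : {ffun 'I_m -> bool} =>
    pert_weight rho r s * b2R (E r s))).

Definition Hinf_ge (m : nat) (rho : R) (O : eqType)
  (W : {ffun 'I_m -> bool} -> {ffun 'I_m -> bool} -> O) (k : R) : Prop :=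
  forall w : O, 0 < Pr_pert rho (fun r s => W r s == w) ->
    k <= - log2 (Pr_pert rho (fun r s => W r s == w)).

(* Agree_{delta2,gamma}(D_rho): Alice gets f, Bob gets g, (f,g) ~ D_rho;
   always (for every (f,g) in the support F_B x F_B) delta(q_A,f) <= delta2 and
   delta(q_B,g) <= delta2; and Pr[q_A = q_B] >= gamma. *)
Definition solves_Agree (X Y : finType) (delta2 gamma rho : R)
  (P : dprotocol {ffun X * Y -> bool} {ffun X * Y -> bool} {ffun X * Y -> bool})
  : Prop :=
  (forall f g, f \in F_B X Y -> g \in F_B X Y ->
     delta (runA P f g) f <= delta2 /\ delta (runB P f g) g <= delta2) /\
  gamma <= Pr_D rho (fun f g => runA P f g == runB P f g).

Definition solves_Distill (m : nat) (k gamma rho : R) (O : eqType)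
  (P : dprotocol {ffun 'I_m -> bool} {ffun 'I_m -> bool} O) : Prop :=
  Hinf_ge rho (runA P) k /\ Hinf_ge rho (runB P) k /\
  gamma <= Pr_pert rho (fun r s => runA P r s == runB P r s).

Definition truth_table (X Y : finType) (r : {ffun 'I_#|Y| -> bool})
  : {ffun X * Y -> bool} :=
  [ffun p => r (enum_rank p.2)].

From HB Require Import structures.
From mathcomp Require Import all_boot.
From Stdlib Require Import Reals Lra.

Set Implicit Arguments.
Unset Strict Implicit.
Unset Printing Implicit Defensive.

(* Reading a string as a truth table is a bijection {0,1}^|Y| -> (Y -> {0,1}) that
   preserves the perturbation weights, so agreement probability and communication
   transfer verbatim. For min-entropy, if Alice outputs q with positive probability,
   every r that can produce q lies in the delta2-ball around q, so
   Pr[q] <= 2^-|Y| * (weighted size of that ball). The ball is bounded by an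
   exponential moment: with L = ln((1 - d)/d), its indicator is dominated by
   exp(L (d |Y| - dist(q, r)/|X|)), whose sum over r factorizes into |Y| factors,
   each at most 1/(1 - d); the resulting bound is exactly 2^((h(d) - 1)|Y|).
   Bob's case follows since a perturbed pair is symmetric. *)

Local Open Scope R_scope.

Lemma RplusA : associative Rplus. Proof. by move=> *; rewrite Rplus_assoc. Qed.
Lemma RmultA : associative Rmult. Proof. by move=> *; rewrite Rmult_assoc. Qed.

HB.instance Definition _ := Monoid.isComLaw.Build R 0 Rplus RplusA Rplus_comm Rplus_0_l.
HB.instance Definition _ := Monoid.isComLaw.Build R 1 Rmult RmultA Rmult_comm Rmult_1_l.
HB.instance Definition _ := Monoid.isMulLaw.Build R 0 Rmult Rmult_0_l Rmult_0_r.
HB.instance Definition _ :=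
  Monoid.isAddLaw.Build R Rmult Rplus Rmult_plus_distr_r Rmult_plus_distr_l.

Section FiniteSums.
Implicit Types (T : finType).

Lemma Rsum_le T (F G : T -> R) : (forall t, F t <= G t) -> Rsum F <= Rsum G.
Proof. by move=> FG; apply: (big_ind2 Rle) => *; [lra | lra | exact: FG]. Qed.

Lemma Rsum_ge0 T (F : T -> R) : (forall t, 0 <= F t) -> 0 <= Rsum F.
Proof. by move=> F0; apply: (big_ind (Rle 0)) => *; [lra | lra | exact: F0]. Qed.

Lemma Rsum_mull T c (F : T -> R) : Rsum (fun t => c * F t) = c * Rsum F.
Proof. by rewrite /Rsum big_distrr. Qed.

Lemma Rsum_mulr T c (F : T -> R) : Rsum (fun t => F t * c) = Rsum F * c.
Proof. by rewrite /Rsum big_distrl. Qed.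

Lemma Rsum_bool (F : bool -> R) : Rsum F = F true + F false.
Proof. by rewrite /Rsum big_bool. Qed.

Lemma Rsum_INR T (F : T -> nat) : Rsum (fun t => INR (F t)) = INR (\sum_t F t).
Proof. by rewrite /Rsum (big_morph INR plus_INR (erefl _)). Qed.

Lemma Rprod_ge0 T (F : T -> R) : (forall t, 0 <= F t) -> 0 <= Rprod F.
Proof. by move=> F0; apply: (big_ind (Rle 0)) => *; [lra | nra | exact: F0]. Qed.

Lemma Rprod_le T (F G : T -> R) : (forall t, 0 <= F t <= G t) -> Rprod F <= Rprod G.
Proof.
move=> FG; suff [] : 0 <= Rprod F <= Rprod G by [].
by apply: (big_ind2 (fun a b => 0 <= a <= b)) => *; [lra | nra | exact: FG].
Qed.

Lemma Rprod_const T c : Rprod (fun _ : T => c) = c ^ #|T|.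
Proof. by rewrite /Rprod big_const; elim: #|T| => //= n ->. Qed.

Lemma Rprod_exp T (F : T -> R) : Rprod (fun t => exp (F t)) = exp (Rsum F).
Proof. by rewrite /Rprod /Rsum (big_morph exp exp_plus exp_0). Qed.

Lemma Rprod_Rsum (I J : finType) (F : I -> J -> R) :
  Rprod (fun i => Rsum (F i)) = Rsum (fun f : {ffun I -> J} => Rprod (fun i => F i (f i))).
Proof. exact: bigA_distr_bigA. Qed.

End FiniteSums.

Section Comap.
Variables (A B A' B' : Type) (fa : A' -> A) (fb : B' -> B).

Lemma transcript_comap (p : proto A B) a b :
  transcript (proto_comap fa fb p) a b = transcript p (fa a) (fb b).
Proof. by elim: p => [|m k IH|m k IH] //=; rewrite IH. Qed.

Lemma depth_comap (p : proto A B) : depth (proto_comap fa fb p) = depth p.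
Proof. by elim: p => [|m k IH|m k IH] //=; rewrite !IH. Qed.

Variables (O : Type) (P : dprotocol A B O).

Lemma comm_comap : comm (dp_comap fa fb P) = comm P.
Proof. exact: depth_comap. Qed.

Lemma runA_comap a b : runA (dp_comap fa fb P) a b = runA P (fa a) (fb b).
Proof. by rewrite /runA /= transcript_comap. Qed.

Lemma runB_comap a b : runB (dp_comap fa fb P) a b = runB P (fa a) (fb b).
Proof. by rewrite /runB /= transcript_comap. Qed.

End Comap.

Section Perturbation.
Variables (I : finType) (rho : R).
Implicit Types r s : {ffun I -> bool}.

Lemma pert_weightC r s : pert_weight rho r s = pert_weight rho s r.
Proof. by rewrite /pert_weight /Rprod; under eq_bigr do rewrite eq_sym. Qed.

Lemma sum_pert_weight r : Rsum (pert_weight rho r) = (/ 2) ^ #|I|.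
Proof.
rewrite /pert_weight Rsum_mull.
rewrite -(Rprod_Rsum (fun i b => if r i == b then 1 - rho else rho)).
rewrite /Rprod (eq_bigr (fun _ => 1)) => [|i _]; last by rewrite Rsum_bool; case: (r i) => /=; lra.
by rewrite -/(Rprod _) Rprod_const pow1 Rmult_1_r.
Qed.

Hypothesis rho01 : 0 <= rho <= 1.

Lemma pert_weight_ge0 r s : 0 <= pert_weight rho r s.
Proof.
apply: Rmult_le_pos; first by apply: pow_le; lra.
by apply: Rprod_ge0 => i; case: ifP => _; lra.
Qed.

End Perturbation.

Section PerturbedProbability.
Variables (m : nat) (rho : R).
Hypothesis rho01 : 0 <= rho <= 1.
Implicit Types E : {ffun 'I_m -> bool} -> {ffun 'I_m -> bool} -> bool.

Lemma Pr_pertC E : Pr_pert rho E = Pr_pert rho (fun r s => E s r).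
Proof.
rewrite /Pr_pert /Rsum exchange_big /=.
by apply: eq_bigr => r _; apply: eq_bigr => s _; rewrite pert_weightC.
Qed.

(* The first coordinate of a perturbed pair is uniform. *)
Lemma Pr_pert_le_avg E (G : {ffun 'I_m -> bool} -> R) :
  (forall r, 0 <= G r) -> (forall r s, E r s -> 1 <= G r) ->
  Pr_pert rho E <= (/ 2) ^ m * Rsum G.
Proof.
move=> G0 EG; rewrite /Pr_pert -Rsum_mull; apply: Rsum_le => r.
have := sum_pert_weight rho r; rewrite card_ord => <-; rewrite -Rsum_mulr.
apply: Rsum_le => s; apply: Rmult_le_compat_l; first exact: pert_weight_ge0.
by rewrite /b2R; case: ifP => [/EG|_]; [lra | exact: G0].
Qed.

End PerturbedProbability.

Section TruthTables.
Variables X Y : finType.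
Implicit Types r s : {ffun 'I_#|Y| -> bool}.

Definition ffun_of_table r : {ffun Y -> bool} := [ffun y => r (enum_rank y)].

Lemma ffun_of_table_bij : bijective ffun_of_table.
Proof.
exists (fun f : {ffun Y -> bool} => [ffun i => f (enum_val i)]) => f; apply/ffunP => i.
  by rewrite !ffunE enum_valK.
by rewrite !ffunE enum_rankK.
Qed.

Lemma truth_tableE r : truth_table X r = liftB X (ffun_of_table r).
Proof. by apply/ffunP => p; rewrite !ffunE. Qed.

Lemma truth_table_in_F_B r : truth_table X r \in F_B X Y.
Proof. by rewrite truth_tableE imset_f. Qed.

Lemma pert_weight_ffun_of_table rho r s :
  pert_weight rho (ffun_of_table r) (ffun_of_table s) = pert_weight rho r s.
Proof.
rewrite /pert_weight card_ord /Rprod; congr (_ * _).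
rewrite (reindex (@enum_val Y predT)) /=; last exact/onW_bij/enum_val_bij.
by apply: eq_bigr => i _; rewrite !ffunE enum_valK.
Qed.

Lemma Pr_pert_truth_table rho E :
  Pr_pert rho (fun r s => E (truth_table X r) (truth_table X s)) = Pr_D rho E.
Proof.
have tab_bij := onW_bij predT ffun_of_table_bij.
rewrite /Pr_D /Rsum (reindex _ tab_bij); apply: eq_bigr => r _.
rewrite (reindex _ tab_bij); apply: eq_bigr => s _.
by rewrite pert_weight_ffun_of_table -!truth_tableE.
Qed.

Variable w : {ffun X * Y -> bool}.

Definition col_mismatch (i : 'I_#|Y|) (b : bool) : nat :=
  \sum_(x : X) (w (x, enum_val i) != b).

Lemma col_mismatch_sum i : (col_mismatch i true + col_mismatch i false)%nat = #|X|.
Proof. by rewrite -big_split -sum1_card; apply: eq_bigr => x _; case: (w _). Qed.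

Lemma card_mismatch_truth_table r :
  #|[set t | w t != truth_table X r t]| = (\sum_i col_mismatch i (r i))%nat.
Proof.
rewrite -sum1dep_card big_mkcond /=.
rewrite (eq_bigr (fun p => nat_of_bool (w (p.1, p.2) != truth_table X r (p.1, p.2))));
  last by case=> x y _; case: (_ != _).
rewrite -(pair_bigA _ (fun x y => nat_of_bool (w (x, y) != truth_table X r (x, y)))).
rewrite exchange_big /= (reindex (@enum_val Y predT)) /=; last exact/onW_bij/enum_val_bij.
apply: eq_bigr => i _; apply: eq_bigr => x _.
by rewrite ffunE /= enum_valK; case: (_ != _).
Qed.

End TruthTables.

Lemma exp_ge1 x : 0 <= x -> 1 <= exp x.
Proof. by have := exp_ineq1_le x; lra. Qed.

Lemma exp_le x y : x <= y -> exp x <= exp y.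
Proof. by case/Rle_lt_or_eq_dec => [/exp_increasing|->]; lra. Qed.

Lemma log2_le x y : 0 < x -> x <= y -> log2 x <= log2 y.
Proof.
move=> x0 xy; have ln2_gt0 : 0 < ln 2 by have := ln_lt_2; lra.
apply: Rmult_le_compat_r; first by apply/Rlt_le/Rinv_0_lt_compat.
by case/Rle_lt_or_eq_dec: xy => [/(ln_increasing _ _ x0)|->]; lra.
Qed.

(* On [e, 1] the convex function u + e / u is maximal at the endpoints. *)
Lemma add_div_le e u : 0 < e <= u -> u <= 1 -> u + e / u <= 1 + e.
Proof.
move=> eu u1; have u0 : 0 < u by lra.
suff : e / u <= 1 + e - u by lra.
apply: (Rmult_le_reg_r u) => //; rewrite /Rdiv Rmult_assoc Rinv_l; nra.
Qed.

Section Tilt.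
Variable d : R.
Hypothesis d_range : 0 < d < 1 / 2.

Definition tilt : R := ln ((1 - d) / d).

Lemma tilt_gt0 : 0 < tilt.
Proof.
rewrite /tilt -ln_1; apply: ln_increasing; first lra.
by apply: (Rmult_lt_reg_r d); [lra | rewrite /Rdiv Rmult_assoc Rinv_l; lra].
Qed.

Lemma exp_Ntilt : exp (- tilt) = d / (1 - d).
Proof.
rewrite exp_Ropp /tilt exp_ln; last by apply: Rdiv_lt_0_compat; lra.
by field; lra.
Qed.

Lemma exp_tilt_pair_le t :
  0 <= t <= 1 -> exp (- tilt * t) + exp (- tilt * (1 - t)) <= / (1 - d).
Proof.
move=> t01; have tilt0 := tilt_gt0.
have -> : exp (- tilt * (1 - t)) = exp (- tilt) / exp (- tilt * t).
  by rewrite /Rdiv -exp_Ropp -exp_plus; congr exp; ring.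
have -> : / (1 - d) = 1 + exp (- tilt) by rewrite exp_Ntilt; field; lra.
apply: add_div_le; last by rewrite -exp_0; apply: exp_le; nra.
by split; [exact: exp_pos | apply: exp_le; nra].
Qed.

Lemma log2_tilt_bound m :
  - log2 ((/ 2) ^ m * (exp (tilt * d * INR m) * (/ (1 - d)) ^ m))
  = (1 - binent d) * INR m.
Proof.
have ln2_gt0 : 0 < ln 2 by have := ln_lt_2; lra.
have inv2_gt0 : 0 < / 2 by lra.
have inv1d_gt0 : 0 < / (1 - d) by apply: Rinv_0_lt_compat; lra.
rewrite /log2 ln_mult; last 2 first.
- exact: pow_lt.
- by apply: Rmult_lt_0_compat; [exact: exp_pos | exact: pow_lt].
rewrite ln_mult ?ln_pow ?ln_exp ?ln_Rinv; try lra;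
  [|exact: exp_pos | exact: pow_lt].
have -> : tilt = ln (1 - d) - ln d.
  by rewrite /tilt ln_mult ?ln_Rinv; try lra; apply: Rinv_0_lt_compat; lra.
by rewrite /binent /log2; field; lra.
Qed.

End Tilt.

Section HammingBall.
Variables (X Y : finType) (d : R) (w : {ffun X * Y -> bool}).
Hypotheses (d_range : 0 < d < 1 / 2) (X_gt0 : (0 < #|X|)%nat) (Y_gt0 : (0 < #|Y|)%nat).
Implicit Types r s : {ffun 'I_#|Y| -> bool}.

Let nX_gt0 : 0 < INR #|X|. Proof. exact/lt_0_INR/ltP. Qed.
Let nY_gt0 : 0 < INR #|Y|. Proof. exact/lt_0_INR/ltP. Qed.

(* Exponential-moment majorant of the indicator of the [d]-ball around [w]. *)
Definition ball_majorant r : R :=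
  exp (tilt d * (d * INR #|Y| - INR (\sum_i col_mismatch w i (r i)) / INR #|X|)).

Lemma ball_majorant_ge1 r : delta w (truth_table X r) <= d -> 1 <= ball_majorant r.
Proof.
rewrite /ball_majorant /delta card_mismatch_truth_table card_prod mult_INR.
set S := INR (\sum_i _) => S_le; apply/exp_ge1/Rmult_le_pos; first exact/Rlt_le/tilt_gt0.
suff : S / INR #|X| <= d * INR #|Y| by lra.
apply: (Rmult_le_reg_r (/ INR #|Y|)); first exact: Rinv_0_lt_compat.
have -> : d * INR #|Y| * / INR #|Y| = d by field; lra.
by apply: Rle_trans S_le; right; field; lra.
Qed.

Lemma ball_majorantE r : ball_majorant r =
  exp (tilt d * d * INR #|Y|) *
  Rprod (fun i => exp (- tilt d * (INR (col_mismatch w i (r i)) / INR #|X|))).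
Proof.
rewrite /ball_majorant Rprod_exp -exp_plus Rsum_mull /Rdiv Rsum_mulr Rsum_INR; congr exp; ring.
Qed.

Lemma sum_ball_majorant :
  Rsum ball_majorant <= exp (tilt d * d * INR #|Y|) * (/ (1 - d)) ^ #|Y|.
Proof.
rewrite /Rsum; under eq_bigr do rewrite ball_majorantE.
rewrite -/(Rsum _) Rsum_mull; apply: Rmult_le_compat_l; first exact/Rlt_le/exp_pos.
rewrite -(Rprod_Rsum (fun i b => exp (- tilt d * (INR (col_mismatch w i b) / INR #|X|)))).
rewrite -[X in _ ^ X]card_ord -Rprod_const; apply: Rprod_le => i; split.
  by apply: Rsum_ge0 => b; exact/Rlt_le/exp_pos.
have := col_mismatch_sum w i; move/(f_equal INR); rewrite plus_INR => sum_n.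
rewrite Rsum_bool.
have -> : INR (col_mismatch w i false) / INR #|X| = 1 - INR (col_mismatch w i true) / INR #|X|.
  by rewrite -sum_n; field; rewrite sum_n; lra.
apply: exp_tilt_pair_le => //; split.
  by apply: Rmult_le_pos; [exact: pos_INR | exact/Rlt_le/Rinv_0_lt_compat].
apply: (Rmult_le_reg_r (INR #|X|)) => //; rewrite /Rdiv Rmult_assoc Rinv_l; last lra.
by have := pos_INR (col_mismatch w i false); lra.
Qed.

Lemma Pr_pert_ball rho (E : {ffun 'I_#|Y| -> bool} -> {ffun 'I_#|Y| -> bool} -> bool) :
  0 <= rho <= 1 -> (forall r s, E r s -> delta w (truth_table X r) <= d) ->
  0 < Pr_pert rho E -> (1 - binent d) * INR #|Y| <= - log2 (Pr_pert rho E).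
Proof.
move=> rho01 E_ball E_pos; rewrite -(log2_tilt_bound d_range); apply/Ropp_le_contravar/log2_le => //.
apply: (Rle_trans _ _ _ (Pr_pert_le_avg rho01 (G := ball_majorant) _ _)).
- by move=> r; exact/Rlt_le/exp_pos.
- by move=> r s /E_ball/ball_majorant_ge1.
- by apply: Rmult_le_compat_l; [apply: pow_le; lra | exact: sum_ball_majorant].
Qed.

End HammingBall.

Local Close Scope R_scope.

Theorem mainTheorem5 (X Y : finType) (rho delta2 gamma : R)
  (hX : (0 < #|X|)%N) (hY : (0 < #|Y|)%N)
  (hrho : (0 < rho < 1 / 2)%R) (hdelta2 : (0 < delta2 < 1 / 2)%R)
  (hgamma : (0 < gamma)%R)
  (P : dprotocol {ffun X * Y -> bool} {ffun X * Y -> bool} {ffun X * Y -> bool}) :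
  solves_Agree delta2 gamma rho P ->
  comm (dp_comap (truth_table X (Y:=Y)) (truth_table X (Y:=Y)) P) = comm P /\
  solves_Distill ((1 - binent delta2) * INR #|Y|)%R gamma rho
    (dp_comap (truth_table X (Y:=Y)) (truth_table X (Y:=Y)) P).
Proof.
move=> [close agree]; split; first exact: comm_comap.
have rho01 : (0 <= rho <= 1)%R by lra.
have tt_in := truth_table_in_F_B X (Y := Y).
split; [|split].
- move=> q; apply: (Pr_pert_ball (w := q)) => // r s /eqP <-.
  by rewrite runA_comap; exact: (close _ _ (tt_in r) (tt_in s)).1.
- move=> q; rewrite Pr_pertC; apply: (Pr_pert_ball (w := q)) => // r s /eqP <-.
  by rewrite runB_comap; exact: (close _ _ (tt_in s) (tt_in r)).2.
- apply: (Rle_trans _ _ _ agree); rewrite -Pr_pert_truth_table; right.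
  by apply: eq_bigr => r _; apply: eq_bigr => s _; rewrite runA_comap runB_comap.
Qed.
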